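(* Let $C$ be a self-dual $[20,10,9]$ code over $\mathrm{GF}(7)$ with $A_7(C)\cong D_{20}^+$. Then there exists a skew-Hadamard matrix $H$ of order $20$ such that $C$ is generated over $\mathrm{GF}(7)$ by the row vectors of $H+2I$ (reduced modulo $7$).
   Context: An $[n,k,d]$ code over $\mathrm{GF}(p)$ is a $k$-dimensional subspace of $\mathrm{GF}(p)^n$ with minimum nonzero Hamming weight $d$; it is self-dual if $C=C^\perp$ under the standard inner product. Construction A: let $\varepsilon_1,\dots,\varepsilon_{20}$ be an orthogonal basis of $\mathbb{R}^{20}$ with $(\varepsilon_i,\varepsilon_j)=7\delta_{i,j}$, and $A_7(C)=\{\frac17\sum_{i=1}^{20} x_i\varepsilon_i\mid x\in\mathbb{Z}^{20},\ x\bmod 7\in C\}$. Lattices $L,L'$ are isomorphic if $L'=\{xA\mid x\in L\}$ for an orthogonal matrix $A$. With $e_1,\dots,e_{20}$ the standard basis of $\mathbb{R}^{20}$: $D_{20}=\{\sum\alpha_ie_i\mid\alpha\in\mathbb{Z}^{20},\ \sum\alpha_i\equiv0\pmod 2\}$, $D_{20}^+=\langle D_{20},\frac12\mathbf 1\rangle$ with $\mathbf 1$ the all-one vector. A Hadamard matrix of order $n$ is an $n\times n$ $(1,-1)$-matrix $H$ with $HH^\top=nI$; it is skew-Hadamard if moreover $H+H^\top=2I$. *)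

From HB Require Import structures.
From mathcomp Require Import all_boot all_order all_algebra.
Set Implicit Arguments. Unset Strict Implicit. Unset Printing Implicit Defensive.
Import Order.TTheory GRing.Theory Num.Theory.
Local Open Scope ring_scope.

(* A linear code of length n over a field F is represented by a matrix whose
   row space (mxalgebra) is the code; codewords are row vectors v with
   (v <= C)%MS. *)

Definition hweight (F : fieldType) n (v : 'rV[F]_n) : nat :=
  #|[set i : 'I_n | v 0 i != 0]|.

(* Dual code w.r.t. the standard inner product: all u with u . c = 0 for every
   row c of C, i.e. u *m C^T = 0. *)
Definition dual_code (F : fieldType) n (C : 'M[F]_n) : 'M[F]_n := kermx C^T.

Definition self_dual (F : fieldType) n (C : 'M[F]_n) : bool :=
  (C == dual_code C)%MS.

Definition min_weight (F : fieldType) n (C : 'M[F]_n) (d : nat) : Prop :=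
  (exists2 v : 'rV[F]_n, (v <= C)%MS /\ v != 0 & hweight v = d) /\
  (forall v : 'rV[F]_n, (v <= C)%MS -> v != 0 -> (d <= hweight v)%N).

Definition is_code (F : fieldType) n (C : 'M[F]_n) (k d : nat) : Prop :=
  \rank C = k /\ min_weight C d.

Definition intmx (R : pzRingType) m n (x : 'M[int]_(m, n)) : 'M[R]_(m, n) :=
  map_mx (fun z : int => z%:~R) x.

(* Construction A: given vectors eps_1..eps_20 (rows of eps) in R^20,
   A_7(C) = { (1/7) sum x_i eps_i | x in Z^20, x mod 7 in C }. *)
Definition inA7 (R : rcfType) (eps : 'M[R]_20) (C : 'M['F_7]_20)
    (v : 'rV[R]_20) : Prop :=
  exists x : 'rV[int]_20,
    (intmx 'F_7 x <= C)%MS /\ v = 7%:R^-1 *: (intmx R x *m eps).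

Definition inD20 (R : rcfType) (v : 'rV[R]_20) : Prop :=
  exists a : 'rV[int]_20, (2 %| \sum_i a 0 i)%Z /\ v = intmx R a.

Definition inD20plus (R : rcfType) (v : 'rV[R]_20) : Prop :=
  exists d : 'rV[R]_20, exists k : int,
    inD20 d /\ v = d + (k%:~R / 2%:R) *: const_mx 1.

Definition lattice_iso (R : rcfType) (L L' : 'rV[R]_20 -> Prop) : Prop :=
  exists A : 'M[R]_20, A *m A^T = 1%:M /\
    (forall v, L' v <-> exists2 x, L x & v = x *m A).

Definition skew_hadamard n (H : 'M[int]_n) : Prop :=
  (forall i j, H i j = 1 \/ H i j = -1) /\
  H *m H^T = n%:R%:M /\ H + H^T = 2%:M.

(* Since A_7(C) = D_20^+ A and the rows of eps lie in A_7(C), eps = Y A with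
   the rows of Y in D_20^+, so U = 2Y is an integral matrix with U U^T = 28.
   A row of norm 28 of 2 D_20^+ must come from the odd coset, so the entries
   of U are odd: one +-3 and nineteen +-1 in every row and every column.
   Permuting and re-signing gives N with 3 on the diagonal, +-1 elsewhere and
   N N^T = 28.  Modulo 7 the rows of N span C: lifting codewords through
   Construction A puts C inside the row space of U^T, which is that of N, and
   N is self-orthogonal hence inside the self-dual C.  If N_ij = N_ji for some
   i <> j, then row_i + N_ij row_j has weight 8 < 9; so N + N^T = 6 and
   H = N - 2 is skew-Hadamard. *)

From mathcomp Require Import all_boot all_order all_algebra finfield.
From mathcomp Require Import zify ring lra.

Set Implicit Arguments.
Unset Strict Implicit.
Unset Printing Implicit Defensive.

Import Order.TTheory GRing.Theory Num.Theory.
Local Open Scope ring_scope.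

Lemma intmx_inj (R : numDomainType) m n : injective (@intmx R m n).
Proof.
move=> x y /matrixP Exy; apply/matrixP => i j.
by have := Exy i j; rewrite !mxE => /intr_inj.
Qed.

Lemma intmxD (R : pzRingType) m n (x y : 'M[int]_(m, n)) :
  intmx R (x + y) = intmx R x + intmx R y.
Proof. by apply/matrixP => i j; rewrite !mxE rmorphD. Qed.

Lemma intmxZ (R : pzRingType) m n (a : int) (x : 'M[int]_(m, n)) :
  intmx R (a *: x) = a%:~R *: intmx R x.
Proof. by apply/matrixP => i j; rewrite !mxE rmorphM. Qed.

Lemma intmxM (R : comPzRingType) m n p (x : 'M[int]_(m, n)) (y : 'M[int]_(n, p)) :
  intmx R (x *m y) = intmx R x *m intmx R y.
Proof. by rewrite /intmx map_mxM. Qed.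

Lemma intmxT (R : pzRingType) m n (x : 'M[int]_(m, n)) :
  intmx R x^T = (intmx R x)^T.
Proof. by rewrite /intmx map_trmx. Qed.

Lemma intmx_scalar (R : pzRingType) n (a : int) :
  intmx R (a%:M : 'M_n) = a%:~R%:M.
Proof. by rewrite /intmx map_scalar_mx. Qed.

Lemma intmx_surj_Fp p m n (c : 'M['F_p]_(m, n)) : exists x, intmx 'F_p x = c.
Proof.
exists (map_mx (fun a : 'F_p => (a : nat)%:Z) c).
by apply/matrixP => i j; rewrite !mxE; apply: natr_Zp.
Qed.

Lemma mulmx_trC_scalar (F : fieldType) n (A : 'M[F]_n) (c : F) :
  c != 0 -> A *m A^T = c%:M -> A^T *m A = c%:M.
Proof.
move=> c_nz AAT.
have /mulmx1C: A *m (c^-1 *: A^T) = 1%:M.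
  by rewrite -scalemxAr AAT scale_scalar_mx mulVf.
move/(congr1 (fun M => c *: M)); rewrite -scalemxAl scalerA mulfV // scale1r => ->.
by rewrite scale_scalar_mx mulr1.
Qed.

Lemma int_mulmx_trC_scalar n (U : 'M[int]_n) (c : int) :
  c != 0 -> U *m U^T = c%:M -> U^T *m U = c%:M.
Proof.
move=> c_nz UUT; apply: (@intmx_inj rat).
rewrite intmxM intmxT intmx_scalar; apply: mulmx_trC_scalar; first by rewrite intr_eq0.
by rewrite -intmxT -intmxM UUT intmx_scalar.
Qed.

Lemma odd_sqr_eq1_or_ge9 (x : int) : ~~ (2 %| x)%Z -> x ^+ 2 = 1 \/ 9 <= x ^+ 2.
Proof.
move=> x_odd; rewrite expr2.
have [[->|->]|[]x_big] : (x = 1 \/ x = -1) \/ (3 <= x \/ x <= -3) by lia.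
- by left.
- by left.
- by right; nia.
- by right; nia.
Qed.

Lemma sqr_eq9 (x : int) : x ^+ 2 = 9 -> x = 3 \/ x = -3.
Proof.
by move/eqP; rewrite (_ : 9 = 3 ^+ 2) // eqf_sqr => /orP[]/eqP; [left | right].
Qed.

Lemma sqr_eq1 (x : int) : x ^+ 2 = 1 -> x = 1 \/ x = -1.
Proof. by move/eqP; rewrite sqrf_eq1 => /orP[]/eqP; [left | right]. Qed.

(* Odd squares are 1 or at least 9, so an excess of 8 over #|I| is one 9. *)
Lemma odd_sqr_sum_excess8 (I : finType) (x : I -> int) :
  (forall j, ~~ (2 %| x j)%Z) -> \sum_j x j ^+ 2 = #|I|%:R + 8 ->
  exists j0, x j0 ^+ 2 = 9 /\ forall j, j != j0 -> x j ^+ 2 = 1.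
Proof.
move=> x_odd x_sum.
have excess_ge0 j : 0 <= x j ^+ 2 - 1.
  by case: (odd_sqr_eq1_or_ge9 (x_odd j)) => [->|]; lra.
have excess_sum : \sum_j (x j ^+ 2 - 1) = 8.
  by rewrite sumrB x_sum sumr_const -[1 *+ _]/(#|I|%:R); lra.
have [j0 /eqP x0_neq1 | all1] := pickP (fun j => x j ^+ 2 != 1); last first.
  by move: excess_sum; rewrite big1 // => j _; rewrite (eqP (negbFE (all1 j))) subrr.
exists j0; move: excess_sum; rewrite (bigD1 j0) //=.
have x0_ge9 : 9 <= x j0 ^+ 2 by case: (odd_sqr_eq1_or_ge9 (x_odd j0)).
have rest_ge0 : 0 <= \sum_(j | j != j0) (x j ^+ 2 - 1) by apply: sumr_ge0.
move=> sum8; have /(psumr_eq0P (fun j _ => excess_ge0 j)) rest0 :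
  \sum_(j | j != j0) (x j ^+ 2 - 1) = 0 by lra.
by split; [lra | move=> j /rest0 /eqP; rewrite subr_eq0 => /eqP].
Qed.

Lemma sqr_F2 (x : 'F_2) : x ^+ 2 = x.
Proof. by rewrite -[in RHS](expf_card x) card_Fp. Qed.

Lemma dvdz2_sum_sqr (I : finType) (b : I -> int) :
  (2 %| \sum_j b j ^+ 2)%Z = (2 %| \sum_j b j)%Z.
Proof.
rewrite !(dvdz_pcharf (pchar_Fp _)) // !rmorph_sum /=.
by under eq_bigr do rewrite rmorphXn /= sqr_F2.
Qed.

Lemma D20_shift_odd (a : 'rV[int]_20) (k : int) :
  (2 %| \sum_j a 0 j)%Z -> \sum_j (2 * a 0 j + k) ^+ 2 = 28 -> ~~ (2 %| k)%Z.
Proof.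
move=> a_even norm28; apply/negP => /dvdzP[m k_even].
have norm7 : \sum_j (a 0 j + m) ^+ 2 = 7.
  suff: 4 * \sum_j (a 0 j + m) ^+ 2 = 28 by lia.
  by rewrite -norm28 mulr_sumr; apply: eq_bigr => j _; rewrite k_even; ring.
have : (2 %| \sum_j (a 0 j + m))%Z.
  by rewrite big_split /= rpredD // sumr_const card_ord pmulrn mulrzz dvdz_mull.
by rewrite -dvdz2_sum_sqr norm7.
Qed.

Lemma bigD2 (I : finType) (V : nmodType) (f : I -> V) i j : i != j ->
  \sum_k f k = f i + f j + \sum_(k | (k != i) && (k != j)) f k.
Proof. by move=> ij; rewrite (bigD1 i) // (bigD1 j) 1?eq_sym //= addrA. Qed.

Lemma hweightE (F : fieldType) n (v : 'rV[F]_n) :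
  (hweight v)%:R = \sum_k (v 0 k != 0)%:R :> int.
Proof. by rewrite /hweight cardsE -sum1_card big_mkcond natr_sum. Qed.

Lemma sqr_add_pm1 (x y : int) : (x = 1 \/ x = -1) -> (y = 1 \/ y = -1) ->
  (x + y) ^+ 2 = 4 * ((x + y)%:~R != 0 :> 'F_7)%:R.
Proof. by move=> [] -> [] ->. Qed.

Section ThreeOnDiagonal.

Variable N : 'M[int]_20.
Hypothesis N_diag : forall i, N i i = 3.
Hypothesis N_offdiag : forall i j, i != j -> N i j = 1 \/ N i j = -1.
Hypothesis N_orth : N *m N^T = 28%:M.

Lemma dot_rows i j : \sum_k N i k * N j k = 28 *+ (i == j).
Proof.
move/matrixP: N_orth => /(_ i j); rewrite !mxE => <-.
by apply: eq_bigr => k _; rewrite mxE.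
Qed.

(* The combination has squared norm 28 + 28 = 56, of which its entries 4 and
   [4 e] at [i] and [j] take 32; every other entry is [0] or [+-2]. *)
Lemma hweight_row_add i j : i != j -> N j i = N i j ->
  (hweight (intmx 'F_7 (row i N + N i j *: row j N)) <= 8)%N.
Proof.
move=> ij Nji; set e := N i j; set v := row i N + e *: row j N.
have ve k : v 0 k = N i k + e * N j k by rewrite !mxE.
have e_pm1 : e = 1 \/ e = -1 by apply: N_offdiag.
have e2 : e * e = 1 by case: e_pm1 => ->.
have v_norm : \sum_k v 0 k ^+ 2 = 56.
  rewrite (eq_bigr (fun k => N i k * N i k + 2 * e * (N i k * N j k)
                             + e * e * (N j k * N j k))); last first.
    by move=> k _; rewrite ve; ring.
  rewrite !big_split /= -!mulr_sumr !dot_rows !eqxx (negbTE ij) e2.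
  by rewrite mulr0n mulr0 mul1r.
have vi : v 0 i = 4 by rewrite ve N_diag Nji -/e mulrC e2.
have vj : v 0 j ^+ 2 = 16.
  by rewrite ve N_diag -/e; transitivity (16 * (e * e)); [ring | rewrite e2].
have v_rest k : (k != i) && (k != j) ->
    v 0 k ^+ 2 = 4 * (intmx 'F_7 v 0 k != 0)%:R.
  case/andP=> ki kj; have ik : i != k by rewrite eq_sym.
  have jk : j != k by rewrite eq_sym.
  rewrite ve mxE ve; apply: sqr_add_pm1; first exact: N_offdiag.
  by case: e_pm1 (N_offdiag jk) => -> [] ->; rewrite ?mul1r ?mulN1r ?opprK; auto.
move: v_norm; rewrite (bigD2 _ ij) vi vj (eq_bigr _ v_rest) -mulr_sumr => rest.
rewrite -(ler_nat int) hweightE (bigD2 _ ij).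
have bool_le1 (b : bool) : b%:R <= 1 :> int by case: b.
have := bool_le1 (intmx 'F_7 v 0 i != 0).
have := bool_le1 (intmx 'F_7 v 0 j != 0).
move: rest; set s := \sum_(k | _) _; clearbody s v; lra.
Qed.

Hypothesis N_weight :
  forall v, (v <= intmx 'F_7 N)%MS -> v != 0 -> (9 <= hweight v)%N.

Lemma N_skew i j : i != j -> N j i = - N i j.
Proof.
move=> ij; have ji : j != i by rewrite eq_sym.
suff : N j i <> N i j by case: (N_offdiag ij) (N_offdiag ji) => -> [] ->.
move=> Nji; have := hweight_row_add ij Nji; apply/negP; rewrite -ltnNge.
apply: N_weight.
  rewrite intmxD intmxZ; apply: addmx_sub; last apply: scalemx_sub;
  by rewrite /intmx map_row row_sub.
apply/eqP => /rowP /(_ i); rewrite !mxE N_diag Nji.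
by case: (N_offdiag ij) => ->.
Qed.

Lemma N_add_tr : N + N^T = 6%:M.
Proof.
apply/matrixP => i j; rewrite !mxE.
by have [->|ij] := eqVneq i j; rewrite ?N_diag // N_skew // subrr.
Qed.

Lemma skew_hadamard_N : skew_hadamard (N - 2%:M).
Proof.
split; [|split].
- move=> i j; rewrite !mxE; have [->|ij] := eqVneq i j.
    by rewrite N_diag; left.
  by rewrite subr0; apply: N_offdiag.
- rewrite linearB /= tr_scalar_mx mulmxBl !mulmxBr N_orth.
  rewrite mul_mx_scalar !mul_scalar_mx.
  apply/matrixP => a b; move/matrixP: N_add_tr => /(_ a b).
  by rewrite !mxE; case: (a == b); rewrite ?mulr1n ?mulr0n; lra.
- apply/matrixP => a b; move/matrixP: N_add_tr => /(_ a b).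
  by rewrite !mxE (eq_sym b a); case: (a == b); rewrite ?mulr1n ?mulr0n; lra.
Qed.

End ThreeOnDiagonal.

Section OddOrthogonal.

Variable U : 'M[int]_20.
Hypothesis U_odd : forall i j, ~~ (2 %| U i j)%Z.
Hypothesis U_orth : U *m U^T = 28%:M.

Lemma U_tr_orth : U^T *m U = 28%:M.
Proof. exact: int_mulmx_trC_scalar. Qed.

Lemma dot_cols j l : \sum_k U k j * U k l = 28 *+ (j == l).
Proof.
move/matrixP: U_tr_orth => /(_ j l); rewrite !mxE => <-.
by apply: eq_bigr => k _; rewrite mxE.
Qed.

Lemma big_entry_row i :
  exists j0, U i j0 ^+ 2 = 9 /\ forall j, j != j0 -> U i j ^+ 2 = 1.
Proof.
apply: odd_sqr_sum_excess8 => [j|]; first exact: U_odd.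
rewrite card_ord (_ : 20%:R + 8 = 28) //.
move/matrixP: U_orth => /(_ i i); rewrite !mxE eqxx mulr1n => <-.
by apply: eq_bigr => j _; rewrite mxE expr2.
Qed.

Lemma big_entry_col j :
  exists i0, U i0 j ^+ 2 = 9 /\ forall i, i != i0 -> U i j ^+ 2 = 1.
Proof.
apply: odd_sqr_sum_excess8 => [i|]; first exact: U_odd.
rewrite card_ord (_ : 20%:R + 8 = 28) //; move: (dot_cols j j).
by rewrite eqxx mulr1n => <-; apply: eq_bigr => i _; rewrite expr2.
Qed.

Lemma big_entry_perm : exists p : 'I_20 -> 'I_20,
  [/\ injective p, forall i, U i (p i) ^+ 2 = 9
    & forall i j, j != i -> U j (p i) ^+ 2 = 1].
Proof.
have [p p_big] := fin_all_exists big_entry_row.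
have col_small i j : j != i -> U j (p i) ^+ 2 = 1.
  have [i0 [_ col_i0]] := big_entry_col (p i).
  have i_i0 : i = i0.
    by apply/eqP; apply: contraT => /col_i0; rewrite (p_big i).1.
  by move=> ji; apply: col_i0; rewrite -i_i0.
exists p; split=> [i i' pii'|i|]; [|by case: (p_big i) | exact: col_small].
by apply/eqP; apply: contraT => /col_small; rewrite -pii' (p_big i).1.
Qed.

Lemma exists_three_on_diagonal : exists N : 'M[int]_20,
  [/\ forall i, N i i = 3, forall i j, i != j -> N i j = 1 \/ N i j = -1,
      N *m N^T = 28%:M & (intmx 'F_7 U^T <= intmx 'F_7 N)%MS].
Proof.
have [p [p_inj p_big p_small]] := big_entry_perm.
pose s i : int := if U i (p i) == 3 then 1 else -1.
have s_big i : s i * U i (p i) = 3.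
  by rewrite /s; case: (sqr_eq9 (p_big i)) => ->.
have s_sqr i : s i * s i = 1 by rewrite /s; case: ifP.
pose N := \matrix_(i, j) (s i * U j (p i)); exists N; split.
- by move=> i; rewrite mxE.
- move=> i j ij; rewrite mxE.
  have : U j (p i) ^+ 2 = 1 by apply: p_small; rewrite eq_sym.
  case/sqr_eq1 => ->.
    by rewrite /s; case: ifP; auto.
  by rewrite /s; case: ifP => _; rewrite mulrN1 ?opprK; auto.
- apply/matrixP => i j; rewrite !mxE.
  rewrite (eq_bigr (fun k => s i * s j * (U k (p i) * U k (p j)))); last first.
    by move=> k _; rewrite !mxE; ring.
  rewrite -mulr_sumr dot_cols (inj_eq p_inj).
  by have [->|] := eqVneq i j; rewrite ?s_sqr ?mulr0n ?mulr0.
- apply/row_subP => l; have /codomP[i ->] := injF_onto p_inj l.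
  have -> : row (p i) (intmx 'F_7 U^T) = (s i)%:~R *: row i (intmx 'F_7 N).
    by apply/rowP => k; rewrite !mxE -rmorphM mulrA s_sqr mul1r.
  by rewrite scalemx_sub ?row_sub.
Qed.

End OddOrthogonal.

Lemma self_orthogonal_sub_self_dual (F : fieldType) m n
    (C : 'M[F]_n) (M : 'M[F]_(m, n)) :
  self_dual C -> (C <= M)%MS -> M *m M^T = 0 -> (M <= C)%MS.
Proof.
move=> /andP[_ C_dual] /submxP[X C_XM] MMT; apply: (submx_trans _ C_dual).
by rewrite sub_kermx C_XM trmx_mul mulmxA MMT mul0mx.
Qed.

Lemma intmx_Fp_self_orth p n (N : 'M[int]_n) (c : int) :
  prime p -> (p %| c)%Z -> N *m N^T = c%:M ->
  intmx 'F_p N *m (intmx 'F_p N)^T = 0.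
Proof.
move=> p_prime p_c NNT; rewrite -intmxT -intmxM NNT intmx_scalar.
by move: p_c; rewrite (dvdz_pcharf (pchar_Fp p_prime)) => /eqP ->; rewrite raddf0.
Qed.

Lemma D20plus_double (R : rcfType) (v : 'rV[R]_20) : inD20plus v ->
  exists2 z : 'rV[int]_20, intmx R z = 2%:R *: v &
    (\sum_j z 0 j ^+ 2 = 28 -> forall j, ~~ (2 %| z 0%R j)%Z).
Proof.
case=> _ [k [[a [a_even ->]] ->]].
exists (\row_j (2 * a 0 j + k)) => [|norm28 j].
  apply/rowP => j; rewrite !mxE rmorphD rmorphM /= mulr1 mulrDr.
  by rewrite mulrCA mulfV ?pnatr_eq0 // mulr1.
have k_odd : ~~ (2 %| k)%Z.
  apply: (D20_shift_odd a_even); rewrite -norm28.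
  by apply: eq_bigr => i _; rewrite mxE.
by rewrite mxE; lia.
Qed.

Section ConstructionA.

Variables (R : rcfType) (eps : 'M[R]_20) (C : 'M['F_7]_20) (A : 'M[R]_20).
Hypothesis eps_orth : eps *m eps^T = 7%:R%:M.
Hypothesis A_orth : A *m A^T = 1%:M.
Hypothesis A7_iso :
  forall v, inA7 eps C v <-> exists2 x, inD20plus x & v = x *m A.

Lemma inA7_D20plus v : inA7 eps C v -> inD20plus (v *m A^T).
Proof. by case/A7_iso => x Dx ->; rewrite -mulmxA A_orth mulmx1. Qed.

Lemma row_eps_inA7 i : inA7 eps C (row i eps).
Proof.
exists (7 *: delta_mx 0 i); split.
  by rewrite intmxZ [(7%:~R : 'F_7)]pchar_Fp_0 // scale0r sub0mx.
rewrite intmxZ /intmx map_delta_mx -scalemxAl scalerA mulVf ?pnatr_eq0 //.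
by rewrite scale1r rowE.
Qed.

Lemma exists_doubled_basis : exists U : 'M[int]_20,
  [/\ forall i j, ~~ (2 %| U i j)%Z, U *m U^T = 28%:M
    & intmx R U = 2%:R *: (eps *m A^T)].
Proof.
have [z z_double z_odd] := fin_all_exists2
  (fun i => D20plus_double (inA7_D20plus (row_eps_inA7 i))).
pose U := \matrix_(i, j) z i 0 j.
have U_double : intmx R U = 2%:R *: (eps *m A^T).
  apply/row_matrixP => i; rewrite linearZ /= row_mul -z_double.
  by apply/rowP => j; rewrite !mxE.
have U_orth : U *m U^T = 28%:M.
  apply: (@intmx_inj R); rewrite intmxM intmxT U_double linearZ /= trmx_mul trmxK.
  rewrite -scalemxAl -scalemxAr -mulmxA (mulmxA A^T) (mulmx1C A_orth) mul1mx.
  by rewrite eps_orth intmx_scalar !scale_scalar_mx -!natrM.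
exists U; split=> // i j; rewrite mxE; apply: z_odd.
move/matrixP: U_orth => /(_ i i); rewrite !mxE eqxx mulr1n => <-.
by apply: eq_bigr => k _; rewrite !mxE expr2.
Qed.

(* A lift [x] of a codeword gives [x eps / 7] in [A_7(C)], hence [x eps A^T]
   in [7 D_20^+]; doubling makes it integral, and [U U^T = 28] recovers [4 x]
   from [x U] modulo 7. *)
Lemma code_sub_doubled (U : 'M[int]_20) :
  U *m U^T = 28%:M -> intmx R U = 2%:R *: (eps *m A^T) ->
  (C <= intmx 'F_7 U^T)%MS.
Proof.
move=> U_orth U_double; apply/row_subP => r.
have [x x_lift] := intmx_surj_Fp (row r C).
have x_A7 : inA7 eps C (7%:R^-1 *: (intmx R x *m eps)).
  by exists x; rewrite x_lift row_sub.
have [z z_double _] := D20plus_double (inA7_D20plus x_A7).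
have xU : x *m U = 7 *: z.
  apply: (@intmx_inj R); rewrite intmxM intmxZ U_double z_double.
  rewrite -scalemxAr -!scalemxAl !scalerA mulmxA; congr (_ *: _).
  by rewrite mulrCA mulfV ?pnatr_eq0 ?mulr1.
have zU : z *m U^T = 4 *: x.
  apply: (@intmx_inj rat); apply: (@scalerI _ _ 7%:~R); first by rewrite intr_eq0.
  by rewrite -!intmxZ scalemxAl -xU -mulmxA U_orth mul_mx_scalar scalerA.
have -> : row r C = 2%:R *: (intmx 'F_7 z *m intmx 'F_7 U^T).
  have two_four : 2 * 4%:~R = 1 :> 'F_7 by apply/eqP.
  by rewrite -intmxM zU intmxZ scalerA two_four scale1r x_lift.
by rewrite scalemx_sub ?submxMl.
Qed.

End ConstructionA.

Theorem proposition1 (R : rcfType) (eps : 'M[R]_20) (C : 'M['F_7]_20) :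
  eps *m eps^T = 7%:R%:M ->
  self_dual C ->
  is_code C 10 9 ->
  lattice_iso (@inD20plus R) (inA7 eps C) ->
  exists H : 'M[int]_20,
    skew_hadamard H /\ (C == intmx 'F_7 (H + 2%:M))%MS.
Proof.
move=> eps_orth C_self_dual [_ [_ C_weight]] [A [A_orth A7_iso]].
have [U [U_odd U_orth U_double]] := exists_doubled_basis eps_orth A_orth A7_iso.
have C_U := code_sub_doubled A_orth A7_iso U_orth U_double.
have [N [N_diag N_offdiag N_orth U_N]] := exists_three_on_diagonal U_odd U_orth.
have C_N := submx_trans C_U U_N.
have N_C : (intmx 'F_7 N <= C)%MS.
  apply: self_orthogonal_sub_self_dual C_self_dual C_N _.
  exact: intmx_Fp_self_orth N_orth.
exists (N - 2%:M); rewrite subrK; split; last by apply/andP.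
apply: skew_hadamard_N => // v v_N; apply: C_weight.
exact: submx_trans v_N N_C.
Qed.
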